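(* If $f, g : X \to \mathbb{R}$ are limsup functions, then $f+g$, $\min(f,g)$ and $\max(f,g)$ are limsup functions.
   Context: Let $A$ be a non-empty countable set and $T$ a pruned tree on $A$ (a set of finite sequences of elements of $A$, closed under initial segments, in which every sequence has a proper extension in $T$). Let $X$ be the set of infinite branches of $T$, with the topology generated by the cylinder sets $O(s) = \{x \in X : s \text{ is an initial segment of } x\}$, $s \in T$. A function $f : X \to \mathbb{R}$ is a limsup function if there exists $u : T \to \mathbb{R}$ with $f(x) = \limsup_{t\to\infty} u(x_0,\dots,x_t)$ for every $x \in X$. *)

From mathcomp Require Import all_boot all_order all_algebra.
From mathcomp Require Import all_classical all_reals all_analysis.
Set Implicit Arguments. Unset Strict Implicit. Unset Printing Implicit Defensive.
Import Order.TTheory GRing.Theory Num.Theory.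
Local Open Scope classical_set_scope.
Local Open Scope ring_scope.

Definition is_tree (A : Type) (T : set (seq A)) : Prop :=
  forall s n, T s -> T (take n s).

Definition is_pruned (A : Type) (T : set (seq A)) : Prop :=
  forall s, T s -> exists t, T t /\ (size s < size t)%N /\ take (size s) t = s.

Definition is_branch (A : Type) (T : set (seq A)) (x : nat -> A) : Prop :=
  forall n, T (mkseq x n).

Definition branches (A : Type) (T : set (seq A)) := {x : nat -> A | is_branch T x}.

Definition limsup_function (R : realType) (A : Type) (T : set (seq A))
    (f : branches T -> R) : Prop :=
  exists u : seq A -> R, forall x : branches T,
    ((f x)%:E = limn_esup (fun t => (u (mkseq (proj1_sig x) t.+1))%:E))%E.

From mathcomp Require Import all_boot all_order all_algebra.
From mathcomp Require Import all_classical all_reals all_analysis.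
From mathcomp Require Import lra zify.
Import Order.TTheory GRing.Theory Num.Theory.
Local Open Scope ring_scope.

(* Given limsup functions f = limsup u and g = limsup v along branches, we
   must produce ONE tree function w with limsup_t w(x|t+1) = op (f x) (g x),
   where w(x|t+1) may only look at the prefix x_0..x_t.  Along a branch put
   a t = u(x|t+1), b t = v(x|t+1) and consider the windowed values
       p t k = op (max_{k<=i<=t} a i) (max_{k<=i<=t} b i),
   which are nondecreasing in t, with sup_t p t k >= op F G and tending to
   op F G as k grows (F, G the limsups of a, b).  The core lemma
   [causal_limsup] turns any such doubly indexed array into a sequence
   [causal p t], computed from the rows t and t-1 only, whose limsup is
   exactly the common limit: each column k is rounded down to the grid
   1/(k+1) (an eventually constant integer sequence) and its value is
   emitted at the finitely many times where it jumps. *)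

Section RealLimsup.
Context {R : realType}.

Lemma limn_esup_EFinP (v : nat -> R) (l : R) :
  limn_esup (fun t => (v t)%:E) = l%:E <->
  ((forall e : R, 0 < e -> exists N, forall m, (N <= m)%N -> v m <= l + e) /\
   (forall e : R, 0 < e -> forall N, exists2 m, (N <= m)%N & l - e <= v m)).
Proof.
rewrite limn_esup_lim (cvg_lim _ (@cvg_esups_inf R _)) //.
set S := esups (fun t => (v t)%:E).
split.
- move=> Sl; split.
  + move=> e e0.
    have : (ereal_inf (range S) < (l + e)%:E)%E by rewrite Sl lte_fin ltrDl.
    move=> /ereal_inf_lt [_ [N _ <-]] SN; exists N => m Nm.
    rewrite -lee_fin; apply: le_trans (ltW SN).
    by apply: ereal_sup_ubound; exists m.
  + move=> e e0 N.
    have : (ereal_inf (range S) <= S N)%E by apply: ereal_inf_lbound; exists N.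
    rewrite Sl => lSN.
    have : ((l - e)%:E < S N)%E.
      by apply: lt_le_trans lSN; rewrite lte_fin ltrBlDr ltrDl.
    move=> /ereal_sup_gt [_ [m /= Nm <-]] vm; exists m => //.
    by rewrite -lee_fin ltW.
- move=> [ev_below freq_above]; apply/eqP; rewrite eq_le; apply/andP; split.
  + apply/lee_addgt0Pr => e e0.
    have [N HN] := ev_below e e0.
    apply: (@le_trans _ _ (S N)); first by apply: ereal_inf_lbound; exists N.
    apply: ge_ereal_sup => _ [m /= Nm <-].
    by rewrite -EFinD lee_fin HN.
  + apply: le_ereal_inf_tmp => _ [N _ <-].
    apply/lee_addgt0Pr => e e0.
    have [m Nm vm] := freq_above e e0 N.
    apply: (@le_trans _ _ (v m + e)%:E); first by rewrite lee_fin -lerBlDr.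
    by rewrite EFinD leeD2r //; apply: ereal_sup_ubound; exists m.
Qed.

Lemma eventually_bounded_bounded (c : nat -> R) (F : R) :
  (exists N, forall m, (N <= m)%N -> c m <= F + 1) -> exists M, forall m, c m <= M.
Proof.
move=> [N HN].
exists (Num.max (\big[Num.max/F]_(i < N) c i) (F + 1)) => m.
case: (leqP N m) => [Nm|mN]; first by rewrite le_max HN ?orbT.
rewrite le_max; apply/orP; left.
by rewrite (bigmax_sup (Ordinal mN)).
Qed.

Lemma eventually_inv_succ_lt (e : R) :
  0 < e -> exists K, forall k, (K <= k)%N -> k.+1%:R^-1 < e.
Proof.
move=> e0; exists (Num.Def.archi_bound e^-1) => k Kk.
rewrite -[e]invrK ltf_pV2 ?posrE ?ltr0Sn ?invr_gt0 //.
apply: lt_le_trans (archi_boundP _) _; first by rewrite invr_ge0 ltW.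
by rewrite ler_nat; lia.
Qed.

End RealLimsup.

(* A nondecreasing integer sequence that is bounded above is eventually
   constant: each change raises it by at least 1, which can happen only
   finitely often below the bound. *)
Lemma nondecreasing_int_stable (z : nat -> int) (B : int) :
  {homo z : m n / (m <= n)%N >-> m <= n} -> (forall t, z t <= B) ->
  exists T, forall t, (T <= t)%N -> z t = z T.
Proof.
move=> zmono zB.
suff gap_ind : forall (n : nat) k, B - z k <= n%:Z ->
    exists T, forall t, (T <= t)%N -> z t = z T.
  by apply: (gap_ind `|B - z 0|%N 0%N); have := zB 0%N; lia.
elim=> [|n IH] k gap.
  exists k => t kt; apply/eqP; rewrite eq_le (zmono _ _ kt) andbT.
  by have := zB t; have := zmono _ _ kt; lia.
case: (pselect (exists2 s, (k <= s)%N & z s != z k)) => [[s ks ne]|same].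
  by apply: (IH s); have := zmono _ _ ks; move: ne gap => /eqP; lia.
exists k => t kt; apply/eqP/negPn/negP => ne.
by apply: same; exists t.
Qed.

Section RunningMax.
Context {R : realType}.

Fixpoint runmax (F : nat -> R) (n : nat) : R :=
  if n is n'.+1 then Num.max (runmax F n') (F n) else F 0%N.

Lemma runmax_ge (F : nat -> R) n i : (i <= n)%N -> F i <= runmax F n.
Proof.
elim: n => [|n IH] /=; first by rewrite leqn0 => /eqP ->.
rewrite leq_eqVlt => /orP [/eqP ->|]; first by rewrite le_max lexx orbT.
by rewrite ltnS => /IH h; rewrite le_max h.
Qed.

Lemma runmax_le (F : nat -> R) n y :
  (forall i, (i <= n)%N -> F i <= y) -> runmax F n <= y.
Proof.
elim: n => [|n IH] H /=; first exact: H.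
by rewrite ge_max IH ?H // => i lin; apply: H; apply: leqW.
Qed.

Lemma runmax_ext (F G : nat -> R) n :
  (forall i, (i <= n)%N -> F i = G i) -> runmax F n = runmax G n.
Proof.
elim: n => [|n IH] H /=; first exact: H.
by rewrite IH ?H // => i lin; apply: H; apply: leqW.
Qed.

Lemma runmax_homo (F : nat -> R) : {homo runmax F : m n / (m <= n)%N >-> m <= n}.
Proof.
by apply: homo_leq => [x|y x z|n]; [exact: lexx|exact: le_trans|rewrite /= le_max lexx].
Qed.

End RunningMax.

Section CausalLimsup.
Context {R : realType}.

Variables (p : nat -> nat -> R) (h : R).
Hypothesis p_nondecr : forall k t, p t k <= p t.+1 k.
Hypothesis p_bounded : forall k, exists M, forall t, p t k <= M.
Hypothesis p_lower : forall k e, 0 < e -> exists t, h - e <= p t k.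
Hypothesis p_upper : forall e, 0 < e ->
  exists K, forall k t, (K <= k)%N -> (k <= t)%N -> p t k <= h + e.

Definition grid (k t : nat) : int := Num.floor (k.+1%:R * p t k).
Definition gridval (k t : nat) : R := (grid k t)%:~R / k.+1%:R.

Definition emit (t k : nat) : R :=
  if (k == t) || (grid k t.-1 < grid k t) then gridval k t else gridval t t.
Definition causal (t : nat) : R := runmax (emit t) t.

Lemma gridval_le k t : gridval k t <= p t k.
Proof. by rewrite /gridval ler_pdivrMr ?ltr0Sn // mulrC floor_le. Qed.

Lemma gridval_gt k t : p t k - k.+1%:R^-1 < gridval k t.
Proof.
rewrite /gridval /grid ltr_pdivlMr ?ltr0Sn // mulrBl mulVf ?pnatr_eq0 //.
by have := floorD1_gt (k.+1%:R * p t k); rewrite intrD mulrC; lra.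
Qed.

Lemma p_homo k : {homo p ^~ k : t s / (t <= s)%N >-> t <= s}.
Proof. by apply: homo_leq => [x|y x z|t]; [exact: lexx|exact: le_trans|exact: p_nondecr]. Qed.

Lemma grid_homo k : {homo grid k : t s / (t <= s)%N >-> t <= s}.
Proof. by move=> t s ts; apply/le_floor/ler_wpM2l/p_homo. Qed.

Lemma grid_stable k : exists T, forall t, (T <= t)%N -> grid k t = grid k T.
Proof.
have [M HM] := p_bounded k.
apply: (@nondecreasing_int_stable _ (Num.floor (k.+1%:R * M)) (grid_homo k)).
by move=> t; apply/le_floor/ler_wpM2l/HM.
Qed.

Lemma grid_last_jump k T : (k <= T)%N ->
  exists t', [/\ (k <= t')%N, grid k t' = grid k T & (t' == k) || (grid k t'.-1 < grid k t')].
Proof.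
move=> kT.
have exT : exists t, (k <= t)%N && (grid k t == grid k T) by exists T; rewrite kT eqxx.
case: (ex_minnP exT) => t' /andP [kt' /eqP eqT] tmin.
exists t'; split => //; case: eqVneq => //= t'k.
have le1 := grid_homo k _ _ (leq_pred t').
rewrite lt_neqAle le1 andbT; apply/negP => /eqP eq1.
have := tmin t'.-1; rewrite eq1 eqT eqxx andbT; lia.
Qed.

(* Eventually all emitted values are below h + e: columns below the
   threshold K of [p_upper] have stopped jumping. *)
Lemma causal_upper e : 0 < e -> exists N, forall m, (N <= m)%N -> causal m <= h + e.
Proof.
move=> e0; have [K HK] := p_upper _ e0.
have [T HT] := choice grid_stable.
exists (maxn (\max_(k < K) T k).+1 K) => m Nm.
have diag_below : gridval m m <= h + e by apply: le_trans (gridval_le _ _) (HK _ _ _ _); lia.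
apply: runmax_le => i im; rewrite /emit; case: ifP => // jump.
case: (leqP K i) => [Ki|iK]; first exact: le_trans (gridval_le _ _) (HK _ _ Ki im).
have TiN : (T i <= \max_(k < K) T k)%N.
  exact: (@leq_bigmax _ (fun k : 'I_K => T k) (Ordinal iK)).
by move: jump; rewrite (HT i m.-1) ?(HT i m); lia.
Qed.

(* Infinitely often some emitted value is above h - e: a column k with
   1/(k+1) < e/2 emits its final grid value, which is close to its sup. *)
Lemma causal_lower e : 0 < e -> forall N, exists2 m, (N <= m)%N & h - e <= causal m.
Proof.
move=> e0 N; have e20 : 0 < e / 2 by rewrite divr_gt0.
have [K HK] := eventually_inv_succ_lt _ e20.
pose k := maxn N K.
have [T HT] := grid_stable k.
have [t [kt jumpT jump]] := grid_last_jump _ _ (leq_maxr T k).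
have [s hs] := p_lower k _ e20.
exists t; first lia.
apply: le_trans (runmax_ge (emit t) t k kt); rewrite /emit eq_sym jump.
have -> : gridval k t = gridval k (maxn s (maxn T k)).
  by rewrite /gridval jumpT (HT (maxn T k)) ?(HT (maxn s (maxn T k))) //; lia.
set M := maxn s (maxn T k).
have := gridval_gt k M; have := HK k (leq_maxr N K).
have := p_homo k _ _ (leq_maxl s (maxn T k)).
move: hs; set c := k.+1%:R^-1; lra.
Qed.

Lemma causal_limsup : limn_esup (fun t => (causal t)%:E) = h%:E.
Proof. by apply/limn_esup_EFinP; split; [exact: causal_upper|exact: causal_lower]. Qed.

End CausalLimsup.

Lemma causal_ext (R : realType) (p p' : nat -> nat -> R) t :
  (forall k, (k <= t)%N -> p t k = p' t k /\ p t.-1 k = p' t.-1 k) ->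
  causal p t = causal p' t.
Proof.
move=> H; apply: runmax_ext => i it.
have [e1 e2] := H i it; have [e3 _] := H t (leqnn t).
by rewrite /emit /gridval /grid e1 e2 e3.
Qed.

Section WindowedOp.
Context {R : realType}.

Definition regular_op (op : R -> R -> R) : Prop :=
  [/\ forall x x' y y', x <= x' -> y <= y' -> op x y <= op x' y',
      forall x y e : R, 0 < e -> op (x + e / 2) (y + e / 2) <= op x y + e &
      forall x y e : R, 0 < e -> op x y - e <= op (x - e / 2) (y - e / 2)].

(* window a k t = max_{k <= i <= t} a i (just a k when t < k). *)
Definition window (a : nat -> R) (k t : nat) : R := runmax (fun i => a (k + i)%N) (t - k).

Lemma window_ge (a : nat -> R) k t i : (k <= i <= t)%N -> a i <= window a k t.
Proof.
move=> /andP [ki it]; have := runmax_ge (fun i => a (k + i)%N) (t - k) (i - k).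
by rewrite subnKC //; apply; lia.
Qed.

Lemma window_le (a : nat -> R) k t y :
  (forall i, (k <= i)%N -> a i <= y) -> window a k t <= y.
Proof. by move=> H; apply: runmax_le => i _; apply: H; apply: leq_addr. Qed.

Lemma window_nondecr (a : nat -> R) k t : window a k t <= window a k t.+1.
Proof. by apply: runmax_homo; apply: leq_sub2r. Qed.

Lemma window_ext (a a' : nat -> R) k t :
  (forall m, (m <= maxn k t)%N -> a m = a' m) -> window a k t = window a' k t.
Proof. by move=> H; apply: runmax_ext => i it; apply: H; lia. Qed.

Definition window_op (op : R -> R -> R) (a b : nat -> R) (t k : nat) : R :=
  op (window a k t) (window b k t).

Lemma window_op_limsup (op : R -> R -> R) (a b : nat -> R) (F G : R) :
  regular_op op ->
  limn_esup (fun t => (a t)%:E) = F%:E -> limn_esup (fun t => (b t)%:E) = G%:E ->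
  limn_esup (fun t => (causal (window_op op a b) t)%:E) = (op F G)%:E.
Proof.
move=> [opm opup oplo] /limn_esup_EFinP [Ha1 Ha2] /limn_esup_EFinP [Hb1 Hb2].
have [Ma HMa] := eventually_bounded_bounded _ _ (Ha1 _ ltr01).
have [Mb HMb] := eventually_bounded_bounded _ _ (Hb1 _ ltr01).
apply: causal_limsup => [k t|k|k e e0|e e0]; rewrite /window_op.
- by apply: opm; apply: window_nondecr.
- by exists (op Ma Mb) => t; apply: opm; apply: window_le.
- have e20 : 0 < e / 2 by rewrite divr_gt0.
  have [m1 km1 h1] := Ha2 _ e20 k; have [m2 km2 h2] := Hb2 _ e20 k.
  exists (maxn m1 m2); apply: le_trans (oplo _ _ _ e0) _.
  by apply: opm; [apply: le_trans h1 _|apply: le_trans h2 _]; apply: window_ge; lia.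
- have e20 : 0 < e / 2 by rewrite divr_gt0.
  have [Na HNa] := Ha1 _ e20; have [Nb HNb] := Hb1 _ e20.
  exists (maxn Na Nb) => k t Kk kt; apply: le_trans (opup _ _ _ e0).
  by apply: opm; apply: window_le => i ki; [apply: HNa|apply: HNb]; lia.
Qed.

End WindowedOp.

Lemma take_mkseq (A : Type) (x : nat -> A) m t : (m <= t)%N ->
  take m (mkseq x t) = mkseq x m.
Proof. by move=> mt; rewrite /mkseq -map_take take_iota minnE; congr (map _ (iota _ _)); lia. Qed.

(* Limsup functions are closed under any regular operation: the tree
   function reading a node s of length t+1 runs the causal construction on
   the values of u and v at the prefixes of s. *)
Lemma limsup_function_op {R : realType} {A : Type} {T : set (seq A)}
    {op : R -> R -> R} {f g : branches T -> R} :
  regular_op op -> limsup_function f -> limsup_function g ->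
  limsup_function (fun x => op (f x) (g x)).
Proof.
move=> opreg [u Hu] [v Hv].
pose along (w : seq A -> R) (s : seq A) (m : nat) := w (take m.+1 s).
exists (fun s => causal (window_op op (along u s) (along v s)) (size s).-1) => x.
pose a m := u (mkseq (proj1_sig x) m.+1); pose b m := v (mkseq (proj1_sig x) m.+1).
rewrite -(window_op_limsup op a b _ _ opreg (esym (Hu x)) (esym (Hv x))).
congr limn_esup; apply: funext => t; rewrite size_mkseq /=; congr EFin.
apply: causal_ext => k kt; rewrite /window_op.
by split; congr op; apply: window_ext => m mt; rewrite /along take_mkseq //; lia.
Qed.

Lemma add_regular (R : realType) : regular_op (fun x y : R => x + y).
Proof. by split=> *; lra. Qed.

Lemma min_regular (R : realType) : regular_op (fun x y : R => Num.min x y).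
Proof.
split=> [x x' y y' *|x y e *|x y e *];
  [case: (leP x y); case: (leP x' y')
  |case: (leP x y); case: (leP (x + e / 2) (y + e / 2))
  |case: (leP x y); case: (leP (x - e / 2) (y - e / 2))] => *; lra.
Qed.

Lemma max_regular (R : realType) : regular_op (fun x y : R => Num.max x y).
Proof.
split=> [x x' y y' *|x y e *|x y e *];
  [case: (leP x y); case: (leP x' y')
  |case: (leP x y); case: (leP (x + e / 2) (y + e / 2))
  |case: (leP x y); case: (leP (x - e / 2) (y - e / 2))] => *; lra.
Qed.

Theorem mainTheorem2 (R : realType) (A : countType) (a0 : A)
    (T : set (seq A)) (hT : is_tree T) (hP : is_pruned T)
    (f g : branches T -> R) :
  limsup_function f -> limsup_function g ->
  [/\ limsup_function (fun x => f x + g x),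
      limsup_function (fun x => Num.min (f x) (g x)) &
      limsup_function (fun x => Num.max (f x) (g x))].
Proof.
move=> Hf Hg; split.
- exact: (limsup_function_op (add_regular R) Hf Hg).
- exact: (limsup_function_op (min_regular R) Hf Hg).
- exact: (limsup_function_op (max_regular R) Hf Hg).
Qed.
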